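(* In the multi-period newsvendor setting described in the context, suppose the demands are independent with $X_t\sim\mathrm{Pois}(\lambda_t)$ for $t\in\{1,\dots,T\}$. Then for every fixed $\boldsymbol q\in\mathbb N_0^T$, the expected cost $C_{\boldsymbol\lambda}(\boldsymbol q)$ is convex in $\lambda_t$ for each $t=1,\dots,T$.
   Context: There are $T$ periods; $q_t\in\mathbb N_0$ is the order delivered at the start of period $t$, $X_t$ the demand in period $t$. Inventory: $I_t=\sum_{k=1}^t(q_k-X_k)$, $I_t^+=\max\{I_t,0\}$, $I_t^-=\max\{-I_t,0\}$. Nonnegative constants: holding cost $h$, backorder cost $b$, price $p$; unit ordering costs $w_t$. The expected cost under rates $\boldsymbol\lambda$ is $$C_{\boldsymbol\lambda}(\boldsymbol q)=p\,\mathbb E_{\boldsymbol\lambda}[I_T^-]+\sum_{t=1}^T\Big(h\,\mathbb E_{\boldsymbol\lambda}[I_t^+]+b\,\mathbb E_{\boldsymbol\lambda}[I_t^-]+w_tq_t-p\,\mathbb E_{\boldsymbol\lambda}[X_t]\Big).$$ *)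

From Stdlib Require Import Reals Lra Lia.
From Coquelicot Require Import Coquelicot.
Open Scope R_scope.

Definition poisson_pmf (l : R) (j : nat) : R := exp (- l) * l ^ j / INR (Factorial.fact j).

Definition upd {A : Type} (f : nat -> A) (k : nat) (v : A) : nat -> A :=
  fun i => if Nat.eqb i k then v else f i.

(* Demand realisations are functions x : nat -> nat (only x 1, ..., x T matter).
   [iexp n k lam f x] integrates f over coordinates k, ..., k+n-1, each
   independently Poisson(lam i) distributed, i.e. the expectation under the
   product (independent) law, written as an iterated series. *)
Fixpoint iexp (n k : nat) (lam : nat -> R) (f : (nat -> nat) -> R)
  (x : nat -> nat) : R :=
  match n with
  | O => f x
  | S n' => Series (fun j => poisson_pmf (lam k) j * iexp n' (S k) lam f (upd x k j))
  end.

Definition Expect (T : nat) (lam : nat -> R) (f : (nat -> nat) -> R) : R :=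
  iexp T 1 lam f (fun _ => O).

Fixpoint inv (q x : nat -> nat) (t : nat) : R :=
  match t with
  | O => 0
  | S t' => inv q x t' + (INR (q t) - INR (x t))
  end.

Definition pos (y : R) : R := Rmax y 0.
Definition neg (y : R) : R := Rmax (- y) 0.

Fixpoint sum1 (T : nat) (g : nat -> R) : R :=
  match T with O => 0 | S T' => sum1 T' g + g T end.

Definition cost (T : nat) (h b p : R) (w : nat -> R) (lam : nat -> R)
  (q : nat -> nat) : R :=
  p * Expect T lam (fun x => neg (inv q x T)) +
  sum1 T (fun t =>
    h * Expect T lam (fun x => pos (inv q x t)) +
    b * Expect T lam (fun x => neg (inv q x t)) +
    w t * INR (q t) -
    p * Expect T lam (fun x => INR (x t))).

(* If G : nat -> R grows at most linearly, l |-> E G(N_l) with N_l ~ Pois(l) is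
   e^{-l} times an entire power series, and its derivative is E (G(N_l + 1) - G(N_l)).
   Hence its second derivative is the mean of the second difference of G, and it is
   convex in l whenever G is discretely convex.
   Fix t and view each cost integrand as a function of the demand X_t: I_s^+ and I_s^-
   are convex functions of I_s, which is affine in X_t, and -X_s is affine in X_t.
   Integrating out the demands after t preserves discrete convexity in X_t (the
   expectation is linear and positive), the Poisson(lam_t) expectation turns it into
   convexity in lam_t, and integrating out the demands before t mixes convex functions
   of lam_t with nonnegative weights. The cost is a nonnegative combination of such
   expectations and constants. *)

From Pilot Require Import Defs.
From Stdlib Require Import Reals Lra Lia FunctionalExtensionality.
From Coquelicot Require Import Coquelicot.
Open Scope R_scope.

Lemma Series_nonneg (a : nat -> R) : (forall n, 0 <= a n) -> ex_series a -> 0 <= Series a.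
Proof.
  intros Ha Hex.
  replace 0 with (Series (fun _ => 0 * 0)).
  - apply Series_le; [intros n; rewrite Rmult_0_l; split; [lra | apply Ha] | exact Hex].
  - rewrite Series_scal_l; ring.
Qed.

Lemma Series_le_of_ex (a b : nat -> R) :
  (forall n, a n <= b n) -> ex_series a -> ex_series b -> Series a <= Series b.
Proof.
  intros Hab Ha Hb.
  assert (H : 0 <= Series (fun n => b n - a n)).
  { apply Series_nonneg; [intros n; specialize (Hab n); lra |].
    apply (@ex_series_minus R_AbsRing R_NormedModule); assumption. }
  rewrite Series_minus in H; [lra | assumption | assumption].
Qed.

Lemma term_le_Series (a : nat -> R) (m : nat) :
  (forall n, 0 <= a n) -> ex_series a -> a m <= Series a.
Proof.
  intros Ha Hex.
  rewrite (Series_incr_n a (S m)) by (lia || exact Hex); simpl pred.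
  assert (Hhead : a m <= sum_f_R0 a m).
  { destruct m; simpl; [lra |]. pose proof (cond_pos_sum a m Ha); lra. }
  assert (Htail : 0 <= Series (fun k => a (S m + k)%nat)).
  { apply Series_nonneg; [intros n; apply Ha |].
    apply (@ex_series_incr_n R_AbsRing R_NormedModule a (S m)), Hex. }
  lra.
Qed.

Lemma poisson_pmf_nonneg (l : R) (j : nat) : 0 <= l -> 0 <= poisson_pmf l j.
Proof.
  intros Hl; unfold poisson_pmf.
  apply Rmult_le_pos; [apply Rmult_le_pos; [left; apply exp_pos | apply pow_le, Hl] |].
  left; apply Rinv_0_lt_compat, INR_fact_lt_0.
Qed.

Lemma poisson_pmf_S (l : R) (j : nat) :
  INR (S j) * poisson_pmf l (S j) = l * poisson_pmf l j.
Proof.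
  unfold poisson_pmf.
  change (Factorial.fact (S j)) with (S j * Factorial.fact j)%nat.
  rewrite mult_INR; simpl pow.
  field; split; [apply INR_fact_neq_0 | apply not_0_INR; lia].
Qed.

Lemma is_series_poisson_pmf (l : R) : is_series (poisson_pmf l) 1.
Proof.
  pose proof (is_series_scal_l (exp (- l)) _ _ (is_exp_Reals l)) as H.
  replace 1 with (scal (exp (- l)) (exp l)).
  - eapply is_series_ext; [| exact H]; intros n.
    unfold scal; simpl; unfold mult; simpl; rewrite pow_n_pow.
    unfold poisson_pmf; field; apply INR_fact_neq_0.
  - unfold scal; simpl; unfold mult; simpl.
    rewrite <- exp_plus, Rplus_opp_l; apply exp_0.
Qed.

Lemma is_series_poisson_mean (l : R) : is_series (fun j => INR j * poisson_pmf l j) l.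
Proof.
  apply is_series_decr_1.
  match goal with |- is_series _ ?v => replace v with (scal l 1)
    by (unfold plus, opp, scal; simpl; unfold mult, plus, opp; simpl; ring) end.
  eapply is_series_ext; [| exact (is_series_scal_l l _ _ (is_series_poisson_pmf l))].
  intros n; rewrite poisson_pmf_S; reflexivity.
Qed.

Definition affine_bounded (G : nat -> R) : Prop :=
  exists C D, 0 <= C /\ 0 <= D /\ forall j, Rabs (G j) <= C + D * INR j.

Lemma poisson_Series_affine_bound (l C D : R) (u : nat -> R) :
  0 <= l -> 0 <= C -> 0 <= D -> (forall j, Rabs (u j) <= C + D * INR j) ->
  ex_series (fun j => poisson_pmf l j * u j) /\
  Rabs (Series (fun j => poisson_pmf l j * u j)) <= C + D * l.
Proof.
  intros Hl HC HD Hu.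
  set (majorant := fun j => C * poisson_pmf l j + D * (INR j * poisson_pmf l j)).
  assert (Hmaj : is_series majorant (C * 1 + D * l)).
  { apply (is_series_plus _ _ _ _ (is_series_scal_l C _ _ (is_series_poisson_pmf l))
                                  (is_series_scal_l D _ _ (is_series_poisson_mean l))). }
  assert (Hdom : forall j, Rabs (poisson_pmf l j * u j) <= majorant j).
  { intros j; unfold majorant.
    pose proof (poisson_pmf_nonneg l j Hl) as Hp.
    rewrite Rabs_mult, (Rabs_pos_eq _ Hp).
    apply Rle_trans with (poisson_pmf l j * (C + D * INR j)); [| lra].
    apply Rmult_le_compat_l; [exact Hp | apply Hu]. }
  assert (Habs : ex_series (fun j => Rabs (poisson_pmf l j * u j))).
  { apply (@ex_series_le R_AbsRing R_CompleteNormedModule _ majorant).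
    - intros j; change norm with Rabs; rewrite Rabs_Rabsolu; apply Hdom.
    - exists (C * 1 + D * l); exact Hmaj. }
  split; [apply ex_series_Rabs, Habs |].
  eapply Rle_trans; [apply Series_Rabs, Habs |].
  replace (C + D * l) with (Series majorant) by (rewrite (is_series_unique _ _ Hmaj); ring).
  apply Series_le; [intros j; split; [apply Rabs_pos | apply Hdom] |].
  exists (C * 1 + D * l); exact Hmaj.
Qed.

Definition fdiff (G : nat -> R) (j : nat) : R := G (S j) - G j.

Lemma affine_bounded_shift (G : nat -> R) :
  affine_bounded G -> affine_bounded (fun j => G (S j)).
Proof.
  intros [C [D [HC [HD H]]]]; exists (C + D), D; repeat split; try lra.
  intros j; eapply Rle_trans; [apply H | rewrite S_INR; lra].
Qed.

Lemma affine_bounded_fdiff (G : nat -> R) : affine_bounded G -> affine_bounded (fdiff G).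
Proof.
  intros [C [D [HC [HD H]]]]; exists (2 * C + D), (2 * D); repeat split; try lra.
  intros j; unfold fdiff; eapply Rle_trans; [apply Rabs_triang |].
  rewrite Rabs_Ropp; pose proof (H (S j)); pose proof (H j); rewrite S_INR in *; lra.
Qed.

(* [poisson_expect G l = E G(N)] for [N ~ Pois(l)], as [e^{-l}] times an entire power series. *)
Definition poisson_coef (G : nat -> R) (j : nat) : R := G j / INR (Factorial.fact j).
Definition poisson_expect (G : nat -> R) (l : R) : R := exp (- l) * PSeries (poisson_coef G) l.

Lemma Series_poisson_expect (G : nat -> R) (l : R) :
  Series (fun j => poisson_pmf l j * G j) = poisson_expect G l.
Proof.
  unfold poisson_expect, PSeries; rewrite <- Series_scal_l; apply Series_ext; intros j.
  unfold poisson_pmf, poisson_coef; field; apply INR_fact_neq_0.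
Qed.

Lemma CV_radius_poisson_coef (G : nat -> R) (l : R) :
  affine_bounded G -> Rbar_lt (Rabs l) (CV_radius (poisson_coef G)).
Proof.
  intros [C [D [HC [HD H]]]].
  set (r := Rabs l + 1).
  assert (Hr : 0 <= r) by (unfold r; pose proof (Rabs_pos l); lra).
  destruct (poisson_Series_affine_bound r C D (fun j => Rabs (G j)) Hr HC HD) as [Hex _].
  { intros j; rewrite Rabs_Rabsolu; apply H. }
  apply Rbar_lt_le_trans with (Finite r); [simpl; unfold r; lra |].
  apply (proj1 (CV_radius_bounded (poisson_coef G))).
  exists (exp r * Series (fun j => poisson_pmf r j * Rabs (G j))); intros n.
  replace (Rabs (poisson_coef G n * r ^ n)) with (exp r * (poisson_pmf r n * Rabs (G n))).
  - apply Rmult_le_compat_l; [left; apply exp_pos |].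
    apply (term_le_Series (fun j => poisson_pmf r j * Rabs (G j))); [| exact Hex].
    intros j; apply Rmult_le_pos; [apply poisson_pmf_nonneg, Hr | apply Rabs_pos].
  - unfold poisson_coef, poisson_pmf, Rdiv; rewrite !Rabs_mult.
    rewrite (Rabs_pos_eq (r ^ n)) by (apply pow_le, Hr).
    rewrite (Rabs_pos_eq (/ _)) by (left; apply Rinv_0_lt_compat, INR_fact_lt_0).
    replace (exp r * (exp (- r) * r ^ n * / INR (Factorial.fact n) * Rabs (G n)))
      with ((exp r * exp (- r)) * (Rabs (G n) * / INR (Factorial.fact n) * r ^ n)) by ring.
    rewrite <- exp_plus, Rplus_opp_r, exp_0; ring.
Qed.

Lemma is_derive_PSeries_poisson_coef (G : nat -> R) (l : R) : affine_bounded G ->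
  is_derive (PSeries (poisson_coef G)) l (PSeries (poisson_coef (fun j => G (S j))) l).
Proof.
  intros HG.
  replace (PSeries (poisson_coef (fun j => G (S j))) l)
    with (PSeries (PS_derive (poisson_coef G)) l).
  - apply is_derive_PSeries, CV_radius_poisson_coef, HG.
  - apply PSeries_ext; intros n; unfold PS_derive, poisson_coef.
    change (Factorial.fact (S n)) with (S n * Factorial.fact n)%nat; rewrite mult_INR.
    field; split; [apply INR_fact_neq_0 | apply not_0_INR; lia].
Qed.

Lemma is_derive_poisson_expect (G : nat -> R) (l : R) : affine_bounded G ->
  is_derive (poisson_expect G) l (poisson_expect (fdiff G) l).
Proof.
  intros HG.
  assert (Hexp : is_derive (fun y => exp (- y)) l (- exp (- l))) by (auto_derive; auto; ring).
  pose proof (is_derive_mult _ _ _ _ _ Hexp (is_derive_PSeries_poisson_coef G l HG) Rmult_comm)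
    as H.
  unfold poisson_expect.
  replace (PSeries (poisson_coef (fdiff G)) l)
    with (PSeries (PS_minus (poisson_coef (fun j => G (S j))) (poisson_coef G)) l).
  - rewrite PSeries_minus.
    + match goal with |- is_derive _ _ ?v => replace v with
        (plus (mult (- exp (- l)) (PSeries (poisson_coef G) l))
              (mult (exp (- l)) (PSeries (poisson_coef (fun j => G (S j))) l)))
        by (unfold plus, mult; simpl; ring) end.
      exact H.
    + apply CV_radius_inside, CV_radius_poisson_coef, affine_bounded_shift, HG.
    + apply CV_radius_inside, CV_radius_poisson_coef, HG.
  - apply PSeries_ext; intros n; unfold PS_minus, poisson_coef, fdiff; simpl.
    unfold minus, plus, opp; simpl; field; apply INR_fact_neq_0.
Qed.

Lemma poisson_expect_nonneg (G : nat -> R) (l : R) :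
  affine_bounded G -> (forall j, 0 <= G j) -> 0 <= l -> 0 <= poisson_expect G l.
Proof.
  intros [C [D [HC [HD H]]]] HG Hl; rewrite <- Series_poisson_expect.
  apply Series_nonneg.
  - intros j; apply Rmult_le_pos; [apply poisson_pmf_nonneg, Hl | apply HG].
  - apply (poisson_Series_affine_bound l C D G Hl HC HD H).
Qed.

Definition convex_on_nonneg (F : R -> R) : Prop :=
  forall l1 l2 th, 0 <= l1 -> 0 <= l2 -> 0 <= th <= 1 ->
    F (th * l1 + (1 - th) * l2) <= th * F l1 + (1 - th) * F l2.

Section DerivativeCriteria.

Variables f df : R -> R.
Hypothesis f_derive : forall x, is_derive f x (df x).

Lemma MVT_le (a b : R) : a <= b -> exists c, a <= c <= b /\ f b - f a = df c * (b - a).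
Proof.
  intros Hab.
  destruct (MVT_gen f a b df) as [c [Hc E]].
  - intros x _; apply f_derive.
  - intros x _; apply continuity_pt_filterlim, (@ex_derive_continuous R_AbsRing R_NormedModule).
    exists (df x); apply f_derive.
  - exists c; split; [| exact E].
    rewrite Rmin_left, Rmax_right in Hc by exact Hab; exact Hc.
Qed.

Lemma incr_of_derive_nonneg :
  (forall x, 0 <= x -> 0 <= df x) -> forall a b, 0 <= a <= b -> f a <= f b.
Proof.
  intros Hdf a b Hab.
  destruct (MVT_le a b (proj2 Hab)) as [c [Hc E]].
  assert (0 <= df c * (b - a)) by (apply Rmult_le_pos; [apply Hdf |]; lra).
  lra.
Qed.

Lemma convex_of_derive_incr :
  (forall a b, 0 <= a <= b -> df a <= df b) -> convex_on_nonneg f.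
Proof.
  intros Hdf.
  assert (Hsorted : forall l1 l2 th, 0 <= l1 <= l2 -> 0 <= th <= 1 ->
            f (th * l1 + (1 - th) * l2) <= th * f l1 + (1 - th) * f l2).
  { intros l1 l2 th Hl Hth.
    set (m := th * l1 + (1 - th) * l2).
    assert (Hm : l1 <= m <= l2) by (unfold m; nra).
    destruct (MVT_le l1 m (proj1 Hm)) as [c1 [Hc1 E1]].
    destruct (MVT_le m l2 (proj2 Hm)) as [c2 [Hc2 E2]].
    (* [m - l1 = (1 - th) (l2 - l1)] and [l2 - m = th (l2 - l1)] *)
    assert (Egap : th * f l1 + (1 - th) * f l2 - f m
                   = th * (1 - th) * (l2 - l1) * (df c2 - df c1))
      by (replace (f l1) with (f m - df c1 * (m - l1)) by lra;
          replace (f l2) with (f m + df c2 * (l2 - m)) by lra; unfold m; ring).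
    assert (df c1 <= df c2) by (apply Hdf; lra).
    assert (0 <= th * (1 - th) * (l2 - l1) * (df c2 - df c1))
      by (apply Rmult_le_pos; [apply Rmult_le_pos; [apply Rmult_le_pos |] |]; lra).
    lra. }
  intros l1 l2 th H1 H2 Hth.
  destruct (Rle_dec l1 l2) as [Hle | Hgt]; [apply Hsorted; lra |].
  replace (th * l1 + (1 - th) * l2) with ((1 - th) * l2 + (1 - (1 - th)) * l1) by ring.
  replace (th * f l1 + (1 - th) * f l2) with ((1 - th) * f l2 + (1 - (1 - th)) * f l1) by ring.
  apply Hsorted; lra.
Qed.

End DerivativeCriteria.

Lemma poisson_expect_convex (G : nat -> R) :
  affine_bounded G -> (forall j, 0 <= fdiff (fdiff G) j) -> convex_on_nonneg (poisson_expect G).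
Proof.
  intros HG Hconv.
  assert (HdG : affine_bounded (fdiff G)) by (apply affine_bounded_fdiff, HG).
  apply (convex_of_derive_incr _ (poisson_expect (fdiff G)));
    [intros x; apply is_derive_poisson_expect, HG |].
  apply (incr_of_derive_nonneg _ (poisson_expect (fdiff (fdiff G))));
    [intros x; apply is_derive_poisson_expect, HdG |].
  intros x Hx; apply poisson_expect_nonneg; [apply affine_bounded_fdiff, HdG | exact Hconv | exact Hx].
Qed.

Lemma convex_on_nonneg_ext (F G : R -> R) :
  (forall l, F l = G l) -> convex_on_nonneg G -> convex_on_nonneg F.
Proof. intros E HG l1 l2 th H1 H2 Hth; rewrite !E; apply HG; assumption. Qed.

Lemma convex_on_nonneg_const (c : R) : convex_on_nonneg (fun _ => c).
Proof. intros l1 l2 th _ _ _; lra. Qed.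

Lemma convex_on_nonneg_plus (F G : R -> R) :
  convex_on_nonneg F -> convex_on_nonneg G -> convex_on_nonneg (fun l => F l + G l).
Proof.
  intros HF HG l1 l2 th H1 H2 Hth.
  pose proof (HF l1 l2 th H1 H2 Hth); pose proof (HG l1 l2 th H1 H2 Hth); lra.
Qed.

Lemma convex_on_nonneg_scal (c : R) (F : R -> R) :
  0 <= c -> convex_on_nonneg F -> convex_on_nonneg (fun l => c * F l).
Proof.
  intros Hc HF l1 l2 th H1 H2 Hth.
  replace (th * (c * F l1) + (1 - th) * (c * F l2)) with (c * (th * F l1 + (1 - th) * F l2))
    by ring.
  apply Rmult_le_compat_l; [exact Hc | apply HF; assumption].
Qed.

Lemma convex_on_nonneg_sum1 (T : nat) (F : nat -> R -> R) :
  (forall s, convex_on_nonneg (F s)) -> convex_on_nonneg (fun l => sum1 T (fun s => F s l)).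
Proof.
  intros HF; induction T as [| T IH]; simpl.
  - apply convex_on_nonneg_const.
  - apply (convex_on_nonneg_plus _ _ IH (HF (S T))).
Qed.

Lemma convex_on_nonneg_Series (F : nat -> R -> R) :
  (forall j, convex_on_nonneg (F j)) -> (forall l, 0 <= l -> ex_series (fun j => F j l)) ->
  convex_on_nonneg (fun l => Series (fun j => F j l)).
Proof.
  intros HF Hex l1 l2 th H1 H2 Hth.
  assert (Hm : 0 <= th * l1 + (1 - th) * l2) by nra.
  rewrite <- !Series_scal_l, <- Series_plus.
  - apply Series_le_of_ex; [intros j; apply HF; assumption | apply Hex, Hm |].
    apply (@ex_series_plus R_AbsRing R_NormedModule);
      apply (@ex_series_scal_l R_AbsRing R_NormedModule); apply Hex; assumption.
  - apply (@ex_series_scal_l R_AbsRing R_NormedModule), Hex, H1.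
  - apply (@ex_series_scal_l R_AbsRing R_NormedModule), Hex, H2.
Qed.

Fixpoint demand_total (M : nat) (x : nat -> nat) : R :=
  match M with O => 0 | S M' => demand_total M' x + INR (x M') end.

Lemma demand_total_nonneg (M : nat) (x : nat -> nat) : 0 <= demand_total M x.
Proof. induction M; simpl; [lra | pose proof (pos_INR (x M)); lra]. Qed.

Lemma demand_total_le_add (M N : nat) (x : nat -> nat) :
  demand_total M x <= demand_total (M + N) x.
Proof.
  induction N as [| N IH]; [rewrite Nat.add_0_r; lra |].
  rewrite Nat.add_succ_r; simpl; pose proof (pos_INR (x (M + N)%nat)); lra.
Qed.

Lemma demand_total_upd (M : nat) (x : nat -> nat) (k j : nat) :
  demand_total M (upd x k j) <= demand_total M x + INR M * INR j.
Proof.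
  induction M as [| M IH]; simpl demand_total; [simpl; lra |].
  rewrite S_INR.
  assert (INR (upd x k j M) <= INR (x M) + INR j).
  { unfold upd; destruct (Nat.eqb M k); pose proof (pos_INR (x M)); pose proof (pos_INR j); lra. }
  lra.
Qed.

Definition lin_growth (f : (nat -> nat) -> R) : Prop :=
  exists A B M, 0 <= A /\ 0 <= B /\ forall x, Rabs (f x) <= A + B * demand_total M x.

Lemma lin_growth_plus (f g : (nat -> nat) -> R) :
  lin_growth f -> lin_growth g -> lin_growth (fun x => f x + g x).
Proof.
  intros [A [B [M [HA [HB Hf]]]]] [A' [B' [M' [HA' [HB' Hg]]]]].
  exists (A + A'), (B + B'), (M + M')%nat; repeat split; try lra.
  intros x; eapply Rle_trans; [apply Rabs_triang |].
  pose proof (Hf x); pose proof (Hg x).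
  pose proof (demand_total_le_add M M' x); pose proof (demand_total_le_add M' M x).
  rewrite Nat.add_comm in H2.
  assert (B * demand_total M x <= B * demand_total (M + M') x) by (apply Rmult_le_compat_l; lra).
  assert (B' * demand_total M' x <= B' * demand_total (M + M') x)
    by (apply Rmult_le_compat_l; lra).
  lra.
Qed.

Lemma lin_growth_scal (c : R) (f : (nat -> nat) -> R) :
  lin_growth f -> lin_growth (fun x => c * f x).
Proof.
  intros [A [B [M [HA [HB Hf]]]]]; exists (Rabs c * A), (Rabs c * B), M.
  pose proof (Rabs_pos c); repeat split; try nra.
  intros x; rewrite Rabs_mult, Rmult_assoc, <- Rmult_plus_distr_l.
  apply Rmult_le_compat_l; [lra | apply Hf].
Qed.

Lemma lin_growth_minus (f g : (nat -> nat) -> R) :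
  lin_growth f -> lin_growth g -> lin_growth (fun x => f x - g x).
Proof.
  intros Hf Hg.
  replace (fun x => f x - g x) with (fun x => f x + -1 * g x)
    by (apply functional_extensionality; intros x; ring).
  apply (lin_growth_plus _ _ Hf (lin_growth_scal (-1) _ Hg)).
Qed.

Lemma lin_growth_upd_bound (f : (nat -> nat) -> R) : lin_growth f ->
  exists A B M, 0 <= A /\ 0 <= B /\ forall x k j,
    Rabs (f (upd x k j)) <= A + B * demand_total M x + B * INR M * INR j.
Proof.
  intros [A [B [M [HA [HB Hf]]]]]; exists A, B, M; repeat split; try assumption.
  intros x k j; eapply Rle_trans; [apply Hf |].
  pose proof (demand_total_upd M x k j).
  assert (B * demand_total M (upd x k j) <= B * (demand_total M x + INR M * INR j))
    by (apply Rmult_le_compat_l; assumption).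
  lra.
Qed.

Lemma affine_bounded_upd (f : (nat -> nat) -> R) (x : nat -> nat) (k : nat) :
  lin_growth f -> affine_bounded (fun j => f (upd x k j)).
Proof.
  intros Hf; destruct (lin_growth_upd_bound f Hf) as [A [B [M [HA [HB H]]]]].
  exists (A + B * demand_total M x), (B * INR M).
  pose proof (demand_total_nonneg M x); pose proof (pos_INR M); repeat split; try nra.
  intros j; apply H.
Qed.

Lemma lin_growth_upd (f : (nat -> nat) -> R) (k j : nat) :
  lin_growth f -> lin_growth (fun x => f (upd x k j)).
Proof.
  intros Hf; destruct (lin_growth_upd_bound f Hf) as [A [B [M [HA [HB H]]]]].
  exists (A + B * INR M * INR j), B, M; pose proof (pos_INR M); pose proof (pos_INR j).
  repeat split; try (assert (0 <= B * INR M * INR j) by (repeat apply Rmult_le_pos; lra); lra).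
  intros x; pose proof (H x k j); lra.
Qed.

Lemma lin_growth_fdiff2_upd (f : (nat -> nat) -> R) (t j : nat) :
  lin_growth f -> lin_growth (fun y => fdiff (fdiff (fun i => f (upd y t i))) j).
Proof. intros Hf; unfold fdiff; repeat apply lin_growth_minus; apply lin_growth_upd, Hf. Qed.

Lemma ex_series_poisson_upd (f : (nat -> nat) -> R) (l : R) (k : nat) (x : nat -> nat) :
  lin_growth f -> 0 <= l -> ex_series (fun j => poisson_pmf l j * f (upd x k j)).
Proof.
  intros Hf Hl; destruct (affine_bounded_upd f x k Hf) as [C [D [HC [HD H]]]].
  apply (poisson_Series_affine_bound l C D _ Hl HC HD H).
Qed.

Lemma lin_growth_poisson_Series (f : (nat -> nat) -> R) (l : R) (k : nat) :
  lin_growth f -> 0 <= l ->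
  lin_growth (fun x => Series (fun j => poisson_pmf l j * f (upd x k j))).
Proof.
  intros Hf Hl; destruct (lin_growth_upd_bound f Hf) as [A [B [M [HA [HB H]]]]].
  exists (A + B * INR M * l), B, M; pose proof (pos_INR M).
  repeat split; try (assert (0 <= B * INR M * l) by (repeat apply Rmult_le_pos; lra); lra).
  intros x; pose proof (demand_total_nonneg M x).
  destruct (poisson_Series_affine_bound l (A + B * demand_total M x) (B * INR M)
              (fun j => f (upd x k j))) as [_ Hle]; [exact Hl | nra | nra | apply H | lra].
Qed.

Definition nonneg_on (lam : nat -> R) (k n : nat) : Prop :=
  forall i, (k <= i < k + n)%nat -> 0 <= lam i.

Lemma nonneg_on_S (lam : nat -> R) (k n : nat) :
  nonneg_on lam k (S n) -> 0 <= lam k /\ nonneg_on lam (S k) n.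
Proof. intros H; split; [apply H; lia | intros i Hi; apply H; lia]. Qed.

Lemma iexp_lin_growth (n k : nat) (lam : nat -> R) (f : (nat -> nat) -> R) :
  nonneg_on lam k n -> lin_growth f -> lin_growth (iexp n k lam f).
Proof.
  revert k; induction n as [| n IH]; intros k Hl Hf; [exact Hf |].
  destruct (nonneg_on_S lam k n Hl) as [Hk Hl'].
  apply lin_growth_poisson_Series; [apply IH |]; assumption.
Qed.

Lemma ex_series_iexp (n k : nat) (lam : nat -> R) (f : (nat -> nat) -> R) (x : nat -> nat) :
  nonneg_on lam k (S n) -> lin_growth f ->
  ex_series (fun j => poisson_pmf (lam k) j * iexp n (S k) lam f (upd x k j)).
Proof.
  intros Hl Hf; destruct (nonneg_on_S lam k n Hl) as [Hk Hl'].
  apply ex_series_poisson_upd; [apply iexp_lin_growth |]; assumption.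
Qed.

Lemma iexp_scal (n k : nat) (lam : nat -> R) (c : R) (f : (nat -> nat) -> R) (x : nat -> nat) :
  iexp n k lam (fun y => c * f y) x = c * iexp n k lam f x.
Proof.
  revert k x; induction n as [| n IH]; intros k x; [reflexivity |]; simpl.
  rewrite <- Series_scal_l; apply Series_ext; intros j; rewrite IH; ring.
Qed.

Lemma iexp_plus (n k : nat) (lam : nat -> R) (f g : (nat -> nat) -> R) (x : nat -> nat) :
  nonneg_on lam k n -> lin_growth f -> lin_growth g ->
  iexp n k lam (fun y => f y + g y) x = iexp n k lam f x + iexp n k lam g x.
Proof.
  revert k x; induction n as [| n IH]; intros k x Hl Hf Hg; [reflexivity |]; simpl.
  rewrite <- Series_plus by (apply ex_series_iexp; assumption).
  apply Series_ext; intros j.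
  rewrite IH by (try apply (nonneg_on_S lam k n Hl); assumption); ring.
Qed.

Lemma iexp_minus (n k : nat) (lam : nat -> R) (f g : (nat -> nat) -> R) (x : nat -> nat) :
  nonneg_on lam k n -> lin_growth f -> lin_growth g ->
  iexp n k lam (fun y => f y - g y) x = iexp n k lam f x - iexp n k lam g x.
Proof.
  intros Hl Hf Hg.
  transitivity (iexp n k lam (fun y => f y + -1 * g y) x).
  - f_equal; apply functional_extensionality; intros y; ring.
  - rewrite iexp_plus, iexp_scal by (try apply lin_growth_scal; assumption); ring.
Qed.

Lemma iexp_nonneg (n k : nat) (lam : nat -> R) (f : (nat -> nat) -> R) (x : nat -> nat) :
  nonneg_on lam k n -> lin_growth f -> (forall y, 0 <= f y) -> 0 <= iexp n k lam f x.
Proof.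
  revert k x; induction n as [| n IH]; intros k x Hl Hf Hpos; [apply Hpos |]; simpl.
  destruct (nonneg_on_S lam k n Hl) as [Hk Hl'].
  apply Series_nonneg; [| apply ex_series_iexp; assumption].
  intros j; apply Rmult_le_pos; [apply poisson_pmf_nonneg, Hk | apply IH; assumption].
Qed.

Lemma iexp_ext_rates (n k : nat) (lam1 lam2 : nat -> R) (f : (nat -> nat) -> R) (x : nat -> nat) :
  (forall i, (k <= i)%nat -> lam1 i = lam2 i) -> iexp n k lam1 f x = iexp n k lam2 f x.
Proof.
  revert k x; induction n as [| n IH]; intros k x H; [reflexivity |]; simpl.
  rewrite (H k) by lia; apply Series_ext; intros j.
  rewrite (IH (S k)) by (intros i Hi; apply H; lia); reflexivity.
Qed.

Lemma upd_comm {A : Type} (x : nat -> A) (t k : nat) (a b : A) :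
  t <> k -> upd (upd x t a) k b = upd (upd x k b) t a.
Proof.
  intros H; apply functional_extensionality; intros m; unfold upd.
  destruct (Nat.eqb_spec m k), (Nat.eqb_spec m t); auto; lia.
Qed.

Lemma iexp_upd (n k : nat) (lam : nat -> R) (f : (nat -> nat) -> R) (x : nat -> nat) (t j : nat) :
  (t < k)%nat -> iexp n k lam f (upd x t j) = iexp n k lam (fun y => f (upd y t j)) x.
Proof.
  revert k x; induction n as [| n IH]; intros k x H; [reflexivity |]; simpl.
  apply Series_ext; intros i; rewrite upd_comm, IH by lia; reflexivity.
Qed.

Definition convex_in_coord (t : nat) (f : (nat -> nat) -> R) : Prop :=
  forall x j, 0 <= fdiff (fdiff (fun i => f (upd x t i))) j.

Lemma fdiff2_iexp_upd (n k : nat) (lam : nat -> R) (f : (nat -> nat) -> R)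
  (x : nat -> nat) (t j : nat) :
  (t < k)%nat -> nonneg_on lam k n -> lin_growth f ->
  fdiff (fdiff (fun i => iexp n k lam f (upd x t i))) j
  = iexp n k lam (fun y => fdiff (fdiff (fun i => f (upd y t i))) j) x.
Proof.
  intros Ht Hl Hf; unfold fdiff; rewrite !iexp_upd by exact Ht.
  rewrite !iexp_minus; try reflexivity; try assumption;
    repeat apply lin_growth_minus; apply lin_growth_upd, Hf.
Qed.

Lemma iexp_convex_in_rate (n k : nat) (lam : nat -> R) (f : (nat -> nat) -> R)
  (x : nat -> nat) (t : nat) :
  (k <= t < k + n)%nat -> nonneg_on lam k n -> lin_growth f -> convex_in_coord t f ->
  convex_on_nonneg (fun l => iexp n k (upd lam t l) f x).
Proof.
  revert k x; induction n as [| n IH]; intros k x Ht Hl Hf Hconv; [lia |]; simpl.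
  destruct (nonneg_on_S lam k n Hl) as [Hk Hl'].
  destruct (Nat.eq_dec k t) as [<- | Hne].
  - (* [k = t]: the varied rate is that of the coordinate integrated here *)
    set (G := fun j => iexp n (S k) lam f (upd x k j)).
    apply (convex_on_nonneg_ext _ (poisson_expect G)).
    { intros l; rewrite <- Series_poisson_expect; unfold upd at 1; rewrite Nat.eqb_refl.
      apply Series_ext; intros j; unfold G; f_equal; apply iexp_ext_rates.
      intros i Hi; unfold upd; destruct (Nat.eqb_spec i k); [lia | reflexivity]. }
    apply poisson_expect_convex; [apply affine_bounded_upd, iexp_lin_growth; assumption |].
    intros j; unfold G; rewrite fdiff2_iexp_upd by (lia || assumption).
    apply iexp_nonneg; [exact Hl' | apply lin_growth_fdiff2_upd, Hf | intros y; apply Hconv].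
  - (* [k < t]: coordinate [k] keeps its rate, so this is a mixture with fixed weights *)
    assert (Hk' : forall l, upd lam t l k = lam k)
      by (intros l; unfold upd; destruct (Nat.eqb_spec k t); [lia | reflexivity]).
    assert (Hupd : forall l, 0 <= l -> nonneg_on (upd lam t l) k (S n))
      by (intros l Hl0 i Hi; unfold upd; destruct (Nat.eqb i t); [exact Hl0 | apply Hl; exact Hi]).
    apply convex_on_nonneg_Series.
    + intros j; apply convex_on_nonneg_ext
        with (fun l => poisson_pmf (lam k) j * iexp n (S k) (upd lam t l) f (upd x k j)).
      { intros l; rewrite Hk'; reflexivity. }
      apply convex_on_nonneg_scal; [apply poisson_pmf_nonneg, Hk |].
      apply IH; [lia | assumption | assumption | assumption].
    + intros l Hl0; apply ex_series_iexp; [apply Hupd, Hl0 | exact Hf].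
Qed.

Lemma Expect_opp (T : nat) (lam : nat -> R) (f : (nat -> nat) -> R) :
  Expect T lam (fun x => - f x) = - Expect T lam f.
Proof.
  unfold Expect; rewrite <- (Rmult_1_l (iexp _ _ _ f _)), Ropp_mult_distr_l, <- iexp_scal.
  f_equal; apply functional_extensionality; intros x; ring.
Qed.

Lemma Expect_convex_in_rate (T : nat) (lam : nat -> R) (f : (nat -> nat) -> R) (t : nat) :
  (1 <= t <= T)%nat -> nonneg_on lam 1 T -> lin_growth f -> convex_in_coord t f ->
  convex_on_nonneg (fun l => Expect T (upd lam t l) f).
Proof. intros Ht; apply iexp_convex_in_rate; lia. Qed.

Lemma inv_upd (q x : nat -> nat) (t j s : nat) : (1 <= t)%nat ->
  inv q (upd x t j) s = inv q (upd x t O) s - (if Nat.leb t s then INR j else 0).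
Proof.
  intros Ht; induction s as [| s IH]; cbn [inv].
  - destruct (Nat.leb_spec t 0); [lia | ring].
  - rewrite IH; unfold upd; destruct (Nat.eqb_spec (S s) t) as [<- |].
    + destruct (Nat.leb_spec (S s) s), (Nat.leb_spec (S s) (S s)); try lia; simpl; ring.
    + destruct (Nat.leb_spec t s), (Nat.leb_spec t (S s)); try lia; ring.
Qed.

Lemma inv_abs_le (q x : nat -> nat) (s : nat) :
  Rabs (inv q x s) <= sum1 s (fun i => INR (q i)) + demand_total (S s) x.
Proof.
  induction s as [| s IH]; cbn [inv sum1 demand_total] in *.
  - rewrite Rabs_R0; pose proof (pos_INR (x O)); lra.
  - eapply Rle_trans; [apply Rabs_triang |].
    eapply Rle_trans; [apply Rplus_le_compat_l, Rabs_triang |].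
    rewrite Rabs_Ropp, (Rabs_pos_eq (INR (q (S s)))), (Rabs_pos_eq (INR (x (S s))))
      by apply pos_INR; lra.
Qed.

Lemma sum1_nonneg (T : nat) (g : nat -> R) : (forall s, 0 <= g s) -> 0 <= sum1 T g.
Proof. intros H; induction T; simpl; [lra | pose proof (H (S T)); lra]. Qed.

Lemma lin_growth_comp_inv (phi : R -> R) (q : nat -> nat) (s : nat) :
  (forall y, Rabs (phi y) <= Rabs y) -> lin_growth (fun x => phi (inv q x s)).
Proof.
  intros Hphi; exists (sum1 s (fun i => INR (q i))), 1, (S s); repeat split; try lra.
  - apply sum1_nonneg; intros; apply pos_INR.
  - intros x; rewrite Rmult_1_l; eapply Rle_trans; [apply Hphi | apply inv_abs_le].
Qed.

Definition unit_convex (phi : R -> R) : Prop :=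
  forall y, 0 <= phi (y - 2) - 2 * phi (y - 1) + phi y.

Lemma convex_in_coord_comp_inv (phi : R -> R) (q : nat -> nat) (s t : nat) :
  (1 <= t)%nat -> unit_convex phi -> convex_in_coord t (fun x => phi (inv q x s)).
Proof.
  intros Ht Hphi x j; unfold fdiff.
  rewrite (inv_upd q x t (S (S j)) s Ht), (inv_upd q x t (S j) s Ht), (inv_upd q x t j s Ht).
  destruct (Nat.leb t s); [| lra].
  specialize (Hphi (inv q (upd x t O) s - INR j)); rewrite !S_INR.
  replace (inv q (upd x t O) s - (INR j + 1 + 1)) with (inv q (upd x t O) s - INR j - 2) by ring.
  replace (inv q (upd x t O) s - (INR j + 1)) with (inv q (upd x t O) s - INR j - 1) by ring.
  lra.
Qed.

Lemma pos_abs_le (y : R) : Rabs (Defs.pos y) <= Rabs y.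
Proof.
  unfold Defs.pos, Rmax; destruct (Rle_dec y 0); [rewrite Rabs_R0; apply Rabs_pos | lra].
Qed.

Lemma neg_abs_le (y : R) : Rabs (Defs.neg y) <= Rabs y.
Proof.
  unfold Defs.neg, Rmax; destruct (Rle_dec (- y) 0); [rewrite Rabs_R0; apply Rabs_pos |].
  rewrite Rabs_Ropp; lra.
Qed.

Lemma pos_unit_convex : unit_convex Defs.pos.
Proof.
  intros y; unfold Defs.pos, Rmax.
  destruct (Rle_dec (y - 2) 0), (Rle_dec (y - 1) 0), (Rle_dec y 0); lra.
Qed.

Lemma neg_unit_convex : unit_convex Defs.neg.
Proof.
  intros y; unfold Defs.neg, Rmax.
  destruct (Rle_dec (- (y - 2)) 0), (Rle_dec (- (y - 1)) 0), (Rle_dec (- y) 0); lra.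
Qed.

Lemma lin_growth_opp_demand (s : nat) : lin_growth (fun x => - INR (x s)).
Proof.
  exists 0, 1, (S s); repeat split; try lra.
  intros x; rewrite Rabs_Ropp, Rabs_pos_eq by apply pos_INR; simpl.
  pose proof (demand_total_nonneg s x); lra.
Qed.

Lemma convex_in_coord_opp_demand (s t : nat) : convex_in_coord t (fun x => - INR (x s)).
Proof.
  intros x j; unfold fdiff, upd; destruct (Nat.eqb s t); rewrite ?S_INR; lra.
Qed.

Theorem theorem5p3 (T : nat) (h b p : R) (w : nat -> R) (q : nat -> nat)
  (lam : nat -> R) (t : nat) :
  0 <= h -> 0 <= b -> 0 <= p -> (forall k, 0 <= w k) ->
  (forall k, (1 <= k <= T)%nat -> 0 < lam k) ->
  (1 <= t <= T)%nat ->
  forall (l1 l2 theta : R), 0 < l1 -> 0 < l2 -> 0 <= theta <= 1 ->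
    cost T h b p w (upd lam t (theta * l1 + (1 - theta) * l2)) q <=
    theta * cost T h b p w (upd lam t l1) q
    + (1 - theta) * cost T h b p w (upd lam t l2) q.
Proof.
  intros Hh Hb Hp _ Hlam Ht l1 l2 th H1 H2 Hth.
  assert (Hrates : nonneg_on lam 1 T) by (intros i Hi; left; apply Hlam; lia).
  assert (Hinv : forall phi s, (forall y, Rabs (phi y) <= Rabs y) -> unit_convex phi ->
            convex_on_nonneg (fun l => Expect T (upd lam t l) (fun x => phi (inv q x s))))
    by (intros phi s Habs Hphi; apply Expect_convex_in_rate;
        [| | apply lin_growth_comp_inv | apply convex_in_coord_comp_inv]; (assumption || lia)).
  enough (Hcost : convex_on_nonneg (fun l => cost T h b p w (upd lam t l) q))
    by (apply Hcost; lra).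
  unfold cost; apply convex_on_nonneg_plus.
  - apply convex_on_nonneg_scal, Hinv; [exact Hp | apply neg_abs_le | apply neg_unit_convex].
  - apply convex_on_nonneg_sum1; intros s.
    apply convex_on_nonneg_ext with (fun l =>
      h * Expect T (upd lam t l) (fun x => Defs.pos (inv q x s)) +
      b * Expect T (upd lam t l) (fun x => Defs.neg (inv q x s)) + w s * INR (q s) +
      p * Expect T (upd lam t l) (fun x => - INR (x s))).
    { intros l; rewrite Expect_opp; ring. }
    repeat apply convex_on_nonneg_plus; try apply convex_on_nonneg_const.
    + apply convex_on_nonneg_scal, Hinv; [exact Hh | apply pos_abs_le | apply pos_unit_convex].
    + apply convex_on_nonneg_scal, Hinv; [exact Hb | apply neg_abs_le | apply neg_unit_convex].
    + apply convex_on_nonneg_scal, Expect_convex_in_rate;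
        [exact Hp | exact Ht | exact Hrates | apply lin_growth_opp_demand |
         apply convex_in_coord_opp_demand].
Qed.
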